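(* Let $x\in\mathbb{R}$ be irrational and suppose there are $\alpha\in(0,1)$ and a sequence of rational numbers $(p_j/q_j)_{j\ge1}$ (with $p_j\in\mathbb{Z}$, $q_j\in\mathbb{N}$) with $\lim_{j\to\infty}q_j=+\infty$ such that $\left|x-\frac{p_j}{q_j}\right|\le\alpha^{q_j}$ for each $j\in\mathbb{N}$. Let $r=e^{i2\pi x}$ and $\varphi_r(z)=rz$ for $z\in\mathbb{D}$. Then $1\in\sigma(C_{\varphi_r}, H_0(\mathbb{D}))$.
   Context: $\mathbb{D}$ is the open unit disc; $H_0(\mathbb{D})$ is the Fréchet space of analytic functions $f$ on $\mathbb{D}$ with $f(0)=0$, with the topology of uniform convergence on compact subsets; $C_{\varphi_r}f=f\circ\varphi_r$. For a continuous linear operator $T$ on a Fréchet space $X$, $\sigma(T;X)$ is the set of $\lambda\in\mathbb{C}$ such that $\lambda I-T$ is not a bijection with continuous inverse. *)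

From HB Require Import structures.
From mathcomp Require Import all_boot all_order all_algebra.
From mathcomp Require Import all_classical all_reals all_analysis.
From mathcomp Require Import complex.
Import Order.TTheory GRing.Theory Num.Theory.
Import numFieldNormedType.Exports.

Set Implicit Arguments.
Unset Strict Implicit.
Unset Printing Implicit Defensive.

Local Open Scope classical_set_scope.
Local Open Scope ring_scope.
Local Open Scope complex_scope.

Section Defs.
Variable R : realType.
Local Notation C := R[i].

Definition udisc : set C := [set z | `|z| < 1].

(* Complex differentiability at z (the scalar field of C^o is C itself). *)
Definition cdiff (f : C -> C) (z : C) : Prop := derivable (f : C^o -> C^o) z 1.

(* H_0(D): analytic (= holomorphic) functions on D vanishing at 0.
   Functions on D are represented by functions C -> C extended by 0 outside D,
   so that each element of H_0(D) has a unique representative. *)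
Definition H0 : set (C -> C) :=
  [set f | (forall z, udisc z -> cdiff f z) /\ f 0 = 0 /\
           (forall z, ~ udisc z -> f z = 0)].

Definition cptD : set (set C) := [set K : set C^o | compact K /\ K `<=` udisc].

(* The Frechet space H_0(D) is H0 with the (subspace) topology of
   {family cptD, C^o -> C^o}. *)
Definition HT := {family cptD, C^o -> C^o}.

Definition spectrum_H0 (T : (C -> C) -> (C -> C)) : set C :=
  [set lam | ~ exists S : (C -> C) -> (C -> C),
      (forall g, H0 g -> H0 (S g)) /\
      (forall f, H0 f -> S (lam *: f - T f) = f) /\
      (forall g, H0 g -> lam *: S g - T (S g) = g) /\
      {within (H0 : set HT), continuous (S : HT -> HT)}].

Definition phi (r : C) (z : C) : C := r * z.
Definition Cphi (r : C) (f : C -> C) : C -> C :=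
  fun z => if `|z| < 1 then f (phi r z) else 0.

Definition expi (x : R) : C := (cos (2 * pi * x)) +i* (sin (2 * pi * x)).

End Defs.

From HB Require Import structures.
From mathcomp Require Import all_boot all_order all_algebra.
From mathcomp Require Import all_classical all_reals all_analysis.
From mathcomp Require Import complex.
From mathcomp Require Import ring lra.
Import Order.TTheory GRing.Theory Num.Theory.
Import numFieldNormedType.Exports.
Local Open Scope classical_set_scope.
Local Open Scope ring_scope.

(* Suppose 1 - C_{phi_r} had a continuous inverse S on H_0(D) and fix rho in
   (alpha, 1).  The monomials f_j = (z / rho)^{q_j} satisfy
   (1 - C_{phi_r}) f_j = (1 - r^{q_j}) f_j, and
   |1 - r^{q_j}| <= 4 pi q_j |x - p_j / q_j| <= 4 pi q_j alpha^{q_j},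
   so these images are bounded on D by 4 pi q_j (alpha / rho)^{q_j} -> 0.
   Continuity of S at 0 then forces f_j -> 0 locally uniformly, contradicting
   f_j(rho) = 1. *)

Section Expi.
Context {R : realType}.
Local Open Scope complex_scope.

Lemma expiD (a b : R) : expi (a + b) = expi a * expi b.
Proof.
rewrite /expi mulrDr cosD sinD; apply/eqP; rewrite eq_complex /=.
by apply/andP; split; apply/eqP; ring.
Qed.

Lemma expi0 : expi (0 : R) = 1.
Proof. by rewrite /expi mulr0 cos0 sin0. Qed.

Lemma expiMn (a : R) n : expi a ^+ n = expi (a *+ n).
Proof.
elim: n => [|n IHn]; first by rewrite expr0 mulr0n expi0.
by rewrite exprS IHn mulrS expiD.
Qed.

Lemma expi_nat n : expi (n%:R : R) = 1.
Proof.
have expi1 : expi (1 : R) = 1.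
  by rewrite /expi mulr1 mulr_natl cos2pi sin2pi.
by rewrite -[n%:R]/(1 *+ n) -expiMn expi1 expr1n.
Qed.

Lemma expi_int (k : int) : expi (k%:~R : R) = 1.
Proof.
case: k => n; first exact: expi_nat.
have := expiD (- n.+1%:R) n.+1%:R.
by rewrite addNr expi0 expi_nat mulr1 NegzE mulrNz => <-.
Qed.

Lemma norm_expi (a : R) : `|expi a| = 1.
Proof. by rewrite normc_def /= cos2Dsin2 sqrtr1. Qed.

Lemma normcR (a : R) : `|a%:C| = `|a|%:C.
Proof. by rewrite normc_def /= expr0n addr0 sqrtr_sqr. Qed.

Lemma normc_le_ReIm (a b : R) : `|a +i* b| <= (`|a| + `|b|)%:C.
Proof.
rewrite [a +i* b]complexE /= rmorphD; apply: le_trans (ler_normD _ _) _.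
have normi : `|'i : R[i]| = 1 by rewrite normc_def /= expr0n expr1n add0r sqrtr1.
by rewrite normrM normi mul1r !normcR.
Qed.

End Expi.

Lemma ler_dist_deriv_le1 {R : realType} (f df : R -> R) :
  (forall x : R, is_derive x (1 : R) f (df x)) -> (forall x, `|df x| <= 1) ->
  forall a b, `|f b - f a| <= `|b - a|.
Proof.
move=> fd df_le1.
suff le_ab a b : a <= b -> `|f b - f a| <= `|b - a|.
  move=> a b; case: (leP a b) => [/le_ab //|/ltW/le_ab].
  by rewrite distrC (distrC b).
move=> ab; have f_cont : {within `[a, b], continuous f}.
  by apply: derivable_within_continuous => x _; case: (fd x).
have [c _ ->] := MVT_segment ab (fun x _ => fd x) f_cont.
by rewrite normrM ler_piMl.
Qed.

Lemma ler_dist_sin {R : realType} (a b : R) : `|sin b - sin a| <= `|b - a|.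
Proof. by apply: (@ler_dist_deriv_le1 _ _ cos) => //; exact: cos_max. Qed.

Lemma ler_dist_cos {R : realType} (a b : R) : `|cos b - cos a| <= `|b - a|.
Proof.
by apply: (@ler_dist_deriv_le1 _ _ (fun x => - sin x)) => // x; rewrite normrN sin_max.
Qed.

Section ExpiBounds.
Context {R : realType}.
Local Open Scope complex_scope.

Lemma norm_1_sub_expi (t : R) (k : int) :
  `|1 - expi t| <= (4 * pi * `|t - k%:~R|)%:C.
Proof.
have -> : expi t = expi (t - k%:~R) * expi k%:~R by rewrite -expiD subrK.
rewrite expi_int mulr1.
set s := t - k%:~R; set th := 2 * pi * s.
have -> : 1 - expi s = (1 - cos th) +i* (- sin th).
  by apply/eqP; rewrite eq_complex /= sub0r !eqxx.
apply: le_trans (normc_le_ReIm _ _) _; rewrite lecR normrN.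
have := ler_dist_cos 0 th; have := ler_dist_sin 0 th.
rewrite cos0 sin0 !subr0 distrC => le_sin le_cos.
have -> : 4 * pi * `|s| = `|th| + `|th|.
  by rewrite /th !normrM (ger0_norm (ltW (pi_gt0 R))) ger0_norm //; ring.
exact: lerD.
Qed.

Lemma norm_1_sub_expiXn (x : R) (k : int) (n : nat) : (0 < n)%N ->
  `|1 - expi x ^+ n| <= (4 * pi * n%:R * `|x - k%:~R / n%:R|)%:C.
Proof.
move=> n_gt0; rewrite expiMn; apply: le_trans (norm_1_sub_expi _ k) _.
have n_neq0 : (n%:R : R) != 0 by rewrite pnatr_eq0 -lt0n.
have -> : x *+ n - k%:~R = n%:R * (x - k%:~R / n%:R).
  by rewrite mulrBr mulrCA mulfV // mulr1 mulr_natl.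
by rewrite normrM (ger0_norm (ler0n _ n)) mulrA.
Qed.

Lemma norm_1_sub_expiXn_scaled (x alpha rho : R) (k : int) (n : nat) :
  (0 < n)%N -> 0 < rho -> `|x - k%:~R / n%:R| <= alpha ^+ n ->
  `|(1 - expi x ^+ n) * (rho^-1 ^+ n)%:C| <= (4 * pi * (n%:R * (alpha / rho) ^+ n))%:C.
Proof.
move=> n_gt0 rho_gt0 x_approx.
have rhoVn_ge0 : 0 <= rho^-1 ^+ n by rewrite exprn_ge0 // invr_ge0 ltW.
rewrite normrM normcR (ger0_norm rhoVn_ge0).
apply: le_trans (ler_wpM2r _ (norm_1_sub_expiXn x k n n_gt0)) _; first by rewrite lecR.
rewrite -rmorphM lecR exprMn -!mulrA ler_pM2l // ler_pM2l ?pi_gt0 // ler_pM2l ?ltr0n //.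
exact: ler_wpM2r.
Qed.

End ExpiBounds.

Lemma bernoulli_ineq {R : realDomainType} (h : R) n :
  0 <= h -> 1 + n%:R * h <= (1 + h) ^+ n.
Proof.
move=> h_ge0; elim: n => [|n IHn]; first by rewrite mul0r addr0 expr0.
rewrite exprS -addn1 natrD.
have := ler_wpM2l (addr_ge0 ler01 h_ge0) IHn.
have : 0 <= n%:R * h by rewrite mulr_ge0.
nra.
Qed.

Lemma natrM_exprn_le {R : realFieldType} (d : R) n : 0 < d -> d < 1 ->
  n%:R * d ^+ n <= (d^-1 - 1)^-1.
Proof.
move=> d_gt0 d_lt1; set h := d^-1 - 1.
have h_gt0 : 0 < h by rewrite subr_gt0 invf_gt1.
have -> : d = (1 + h)^-1 by rewrite addrC subrK invrK.
have pow_gt0 : 0 < (1 + h) ^+ n by rewrite exprn_gt0 // addr_gt0.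
rewrite exprVn ler_pdivrMr //.
apply: le_trans (_ : h^-1 * (1 + n%:R * h) <= _).
  by rewrite mulrDr mulr1 mulrCA mulVf ?gt_eqF // mulr1 lerDr invr_ge0 ltW.
apply: ler_wpM2l; first by rewrite invr_ge0 ltW.
by apply: bernoulli_ineq; rewrite ltW.
Qed.

Lemma cvg_natrM_exprn {R : realType} (b : R) : 0 < b -> b < 1 ->
  (fun n => n%:R * b ^+ n) @ \oo --> 0.
Proof.
move=> b_gt0 b_lt1; set c := Num.sqrt b.
have c_gt0 : 0 < c by rewrite sqrtr_gt0.
have c_lt1 : c < 1 by rewrite -sqrtr1 ltr_sqrt.
have bE n : b ^+ n = c ^+ n * c ^+ n by rewrite -exprMn -expr2 sqr_sqrtr // ltW.
apply: (@squeeze_cvgr _ _ _ _ (cst 0) (geometric (c^-1 - 1)^-1 c)).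
- near=> n; have cn_gt0 : 0 < c ^+ n by rewrite exprn_gt0.
  rewrite /= bE mulrA; apply/andP; split.
    by rewrite !mulr_ge0 // ltW.
  by rewrite ler_pM2r // natrM_exprn_le.
- exact: cvg_cst.
- by apply: cvg_geometric; rewrite ger0_norm // ltW.
Unshelve. all: by end_near.
Qed.

Lemma within_continuous_cvg {T U : topologicalType} (A : set T) (S : T -> U)
    (g : nat -> T) (a : T) :
  {within A, continuous S} -> A a -> (forall j, A (g j)) ->
  g @ \oo --> a -> (S \o g) @ \oo --> S a.
Proof.
move=> S_cont Aa Ag g_cvg.
have g_cvgA : g @ \oo --> (a : subspace A).
  apply/(subspace_cvgP _ Aa) => P /g_cvg [N _ gP].
  by exists N => // j /gP; apply.
exact: (cvg_comp _ _ g_cvgA (S_cont a)).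
Qed.

Section H0.
Context {R : realType}.
Local Notation C := R[i].
Local Open Scope complex_scope.

Lemma udisc_open : open (@udisc R : set C^o).
Proof.
have -> : @udisc R = ball (0 : C^o) 1.
  by apply/funext => z; rewrite -ball_normE /ball_ /= sub0r normrN.
exact: ball_open.
Qed.

Definition monomial (c : C) (n : nat) : C -> C :=
  fun z => if `|z| < 1 then c * z ^+ n else 0.

Lemma monomial_H0 c n : (0 < n)%N -> H0 (monomial c n).
Proof.
move=> n_gt0; split; [|split].
- move=> z zD; rewrite /cdiff.
  apply: (@near_eq_derivable _ _ _ (c \*: (@GRing.exp C ^~ n : C^o -> C^o))).
    near=> w; rewrite /monomial ifT //; near: w.
    exact: open_nbhs_nbhs (conj udisc_open zD).
  exact/derivableZ/exprn_derivable.
- by rewrite /monomial normr0 ltr01 expr0n eqn0Ngt n_gt0 mulr0.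
- by move=> z; rewrite /monomial /udisc /= => /negP/negbTE ->.
Unshelve. all: by end_near.
Qed.

Lemma norm_monomial_le c n z : `|monomial c n z| <= `|c|.
Proof.
rewrite /monomial; case: ifP => [z_lt1|_]; last by rewrite normr0.
by rewrite normrM normrX ler_piMr // exprn_ile1 // ltW.
Qed.

Lemma H0_0 : H0 (0 : C -> C).
Proof.
have -> : (0 : C -> C) = monomial 0 1.
  by apply/funext => z; rewrite /monomial mul0r if_same.
exact: monomial_H0.
Qed.

Lemma Cphi0 r : Cphi r (0 : C -> C) = 0.
Proof. by apply/funext => z; rewrite /Cphi if_same. Qed.

Lemma Cphi_monomial r c n : `|r| = 1 ->
  1 *: monomial c n - Cphi r (monomial c n) = monomial ((1 - r ^+ n) * c) n.
Proof.
move=> r_norm1; apply/funext => z.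
rewrite !fctE /Cphi /monomial /phi normrM r_norm1 mul1r.
by case: ifP => _; rewrite scale1r ?subr0 // exprMn; ring.
Qed.

Lemma HT_cvg0_uniform {I : Type} {F : set_system I} {FF : Filter F}
    (G : I -> C -> C) (u : I -> R) :
  (forall j z, `|G j z| <= (u j)%:C) -> u @ F --> 0 -> G @ F --> (0 : HT R).
Proof.
move=> G_le u_cvg.
apply: (proj2 (@fam_cvgP C^o C^o (@cptD R) (G @ F) 0 _)).
move=> K _ P /uniform_nbhs [E [entE EP]].
move: entE; rewrite -entourage_ballE => -[[a b] /= e_gt0 eE].
move: e_gt0 eE; rewrite ltcE /= => /andP [/eqP -> a_gt0] eE.
have := @cvgr0_norm_lt _ R^o _ _ FF u u_cvg _ a_gt0.
apply: filterS => j u_lt_a; apply: EP => z _.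
apply: eE; rewrite /= -ball_normE /= sub0r normrN (le_lt_trans (G_le j z)) //.
by rewrite ltcR (le_lt_trans (ler_norm _)).
Qed.

Lemma HT_cvg_at {I : Type} {F : set_system I} {FF : Filter F}
    (G : I -> C -> C) (f : C -> C) (z : C) :
  `|z| < 1 -> G @ F --> (f : HT R) -> (fun j => G j z) @ F --> (f z : C^o).
Proof.
move=> z_lt1 G_cvg.
have z_cpt : @cptD R [set z] by split; [exact: compact_set1 | move=> w ->].
have := (@fam_cvgP C^o C^o (@cptD R) (G @ F) f _).1 G_cvg _ z_cpt.
by rewrite uniform_set1; apply; exact: fmap_filter.
Qed.

Lemma approx_eigenvector_spectrum_H0 (T : (C -> C) -> (C -> C)) (lam z : C)
    (f : nat -> C -> C) :
  `|z| < 1 -> T 0 = 0 -> (forall j, f j z = 1) -> (forall j, H0 (f j)) ->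
  (forall j, H0 (lam *: f j - T (f j))) ->
  (fun j => lam *: f j - T (f j)) @ \oo --> (0 : HT R) ->
  spectrum_H0 T lam.
Proof.
move=> z_lt1 T0 fz1 f_H0 g_H0 g_cvg [S [_ [S_left [_ S_cont]]]].
have S0 : S 0 = 0.
  by have := S_left 0 H0_0; rewrite T0 scaler0 subr0.
have f_cvg : f @ \oo --> (0 : HT R).
  have -> : f = S \o (fun j => lam *: f j - T (f j)).
    by apply/funext => j; rewrite /= S_left.
  rewrite -S0.
  exact: (@within_continuous_cvg (HT R) (HT R) (@H0 R) S _ 0 S_cont H0_0 g_H0).
have fz_small : \forall j \near \oo, `|f j z| < 1.
  exact: (@cvgr0_norm_lt _ C^o _ _ _ _ (HT_cvg_at f 0 z z_lt1 f_cvg)).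
by have [j] := filter_ex fz_small; rewrite fz1 normr1 ltxx.
Qed.

End H0.

Theorem mainTheorem4 (R : realType) (x : R)
  (x_irr : ~ exists q : rat, x = ratr q)
  (alpha : R) (alpha_gt0 : 0 < alpha) (alpha_lt1 : alpha < 1)
  (p : nat -> int) (q : nat -> nat)
  (q_pos : forall j, (0 < q j)%N)
  (q_oo : ((fun j => (q j)%:R : R) @ \oo --> +oo))
  (approx : forall j, `|x - (p j)%:~R / (q j)%:R| <= alpha ^+ (q j)) :
  spectrum_H0 (Cphi (expi x)) 1.
Proof.
set rho := (1 + alpha) / 2.
have rho_gt0 : 0 < rho by rewrite /rho; lra.
have rho_lt1 : rho < 1 by rewrite /rho; lra.
have beta_gt0 : 0 < alpha / rho by rewrite divr_gt0.
have beta_lt1 : alpha / rho < 1 by rewrite ltr_pdivrMr // mul1r /rho; lra.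
pose f j := monomial ((rho^-1 ^+ q j)%:C)%C (q j).
have gE j : 1 *: f j - Cphi (expi x) (f j) =
    monomial ((1 - expi x ^+ q j) * (rho^-1 ^+ q j)%:C)%C (q j).
  exact: Cphi_monomial (norm_expi x).
apply: (@approx_eigenvector_spectrum_H0 R _ _ (rho%:C)%C f).
- by rewrite normcR ltcR ger0_norm // ltW.
- exact: Cphi0.
- move=> j; rewrite /f /monomial normcR ger0_norm ?ltW // ltcR rho_lt1.
  by rewrite -rmorphXn -rmorphM -exprMn mulVf ?gt_eqF // expr1n.
- by move=> j; apply: monomial_H0.
- by move=> j; rewrite gE; apply: monomial_H0.
rewrite (funext gE).
apply: (@HT_cvg0_uniform R _ _ _ _ (fun j => 4 * pi * ((q j)%:R * (alpha / rho) ^+ q j))).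
  move=> j z; apply: le_trans (norm_monomial_le _ _ _) _.
  exact: norm_1_sub_expiXn_scaled.
rewrite -(mulr0 (4 * pi)); apply: cvgM; first exact: cvg_cst.
have q_cvg : q @ \oo --> \oo by apply/(@cvgrnyP R).
exact: (cvg_comp _ _ q_cvg (cvg_natrM_exprn _ beta_gt0 beta_lt1)).
Qed.
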